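(* Let $1\le p<\infty$ and $\alpha>0$, and consider the differentiation operator $Df=f'$ on $\mathcal{F}^p_{(\alpha,1)}$ (where it is bounded). Then the closed disc $\{\lambda\in\mathbb{C}:|\lambda|\le\alpha\}$ is contained in the spectrum $\sigma(D)$ of $D$ on $\mathcal{F}^p_{(\alpha,1)}$.
   Context: For $\alpha>0$, $m>0$ and $1\le p<\infty$, $\mathcal{F}^p_{(\alpha,m)}$ denotes the Banach space of entire functions $f$ on $\mathbb{C}$ with $\|f\|_{(p,\alpha,m)}^p=\int_{\mathbb{C}}|f(z)|^pe^{-p\alpha|z|^m}\,dA(z)<\infty$, where $dA$ is Lebesgue area measure. *)

From HB Require Import structures.
From mathcomp Require Import all_boot all_order all_algebra.
From mathcomp Require Import all_classical all_reals all_analysis.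
From mathcomp.real_closed Require Import complex.
Set Implicit Arguments. Unset Strict Implicit. Unset Printing Implicit Defensive.
Import Order.TTheory GRing.Theory Num.Theory.
Import numFieldNormedType.Exports.
Local Open Scope ring_scope.
Local Open Scope classical_set_scope.

(* The complex plane is modelled as R[i] = complex R for R : realType;
   R[i] is a numClosedFieldType, hence a normed field over itself, so that
   complex differentiability is MathComp-Analysis' [derivable f z 1]. *)

Definition cmod (R : realType) (z : R[i]) : R :=
  Num.sqrt (complex.Re z ^+ 2 + complex.Im z ^+ 2).

Definition entire (R : realType) (f : R[i] -> R[i]) : Prop :=
  forall z : R[i], derivable (f : (R[i])^o -> (R[i])^o) z 1.

Definition Dop (R : realType) (f : R[i] -> R[i]) : R[i] -> R[i] :=
  fun z => 'D_1 (f : (R[i])^o -> (R[i])^o) z.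

(* integrand of ||f||^p_{(p,alpha,m)}, written in cartesian coordinates
   z = x + i y, so that dA(z) is Lebesgue measure on R x R *)
Definition fock_integrand (R : realType) (p alpha m : R) (f : R[i] -> R[i])
  (xy : R * R) : \bar R :=
  let z : R[i] := (xy.1 +i* xy.2)%C in
  ((cmod (f z) `^ p) * expR (- (p * alpha * (cmod z `^ m))))%:E.

Definition fock_pnorm (R : realType) (p alpha m : R) (f : R[i] -> R[i]) : \bar R :=
  (\int[(@lebesgue_measure R \x @lebesgue_measure R)%E]_(xy in setT)
     fock_integrand p alpha m f xy)%E.

Definition in_Fock (R : realType) (p alpha m : R) (f : R[i] -> R[i]) : Prop :=
  entire f /\ (fock_pnorm p alpha m f < +oo)%E.

(* the norm ||f||_{(p,alpha,m)} (real-valued, meaningful on F^p_{(alpha,m)}) *)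
Definition fock_norm (R : realType) (p alpha m : R) (f : R[i] -> R[i]) : R :=
  fine (fock_pnorm p alpha m f) `^ p^-1.

Definition bounded_op_on_Fock (R : realType) (p alpha m : R)
  (T : (R[i] -> R[i]) -> (R[i] -> R[i])) : Prop :=
  [/\ (forall f, in_Fock p alpha m f -> in_Fock p alpha m (T f)),
      (forall (a : R[i]) f g, in_Fock p alpha m f -> in_Fock p alpha m g ->
          T (fun z => a * f z + g z) = (fun z => a * T f z + T g z)) &
      (exists M : R, forall f, in_Fock p alpha m f ->
          fock_norm p alpha m (T f) <= M * fock_norm p alpha m f)].

Definition in_spectrum_Fock (R : realType) (p alpha m : R)
  (T : (R[i] -> R[i]) -> (R[i] -> R[i])) (lambda : R[i]) : Prop :=
  ~ exists S : (R[i] -> R[i]) -> (R[i] -> R[i]),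
      [/\ bounded_op_on_Fock p alpha m S,
          (forall f, in_Fock p alpha m f ->
              S (fun z => T f z - lambda * f z) = f) &
          (forall f, in_Fock p alpha m f ->
              (fun z => T (S f) z - lambda * S f z) = f)].

From HB Require Import structures.
From mathcomp Require Import all_boot all_order all_algebra.
From mathcomp Require Import all_classical all_reals all_analysis.
From mathcomp.real_closed Require Import complex.
From mathcomp Require Import measurable_realfun ring lra.
Import Order.TTheory GRing.Theory Num.Theory.
Import numFieldNormedType.Exports.
Local Open Scope ring_scope.
Local Open Scope complex_scope.
Local Open Scope classical_set_scope.

(* For |m| < alpha the exponential e_m(z) = exp(m z) belongs to F^p_{(alpha,1)}: its
   weight exp(p Re(m z) - p alpha |z|) is dominated by a product of Laplace kernels
   exp(-k|x|) exp(-k|y|) with k = p (alpha - |m|) / 2.  Since D e_m = m e_m, we get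
   ||(D - lambda) e_m|| = |m - lambda| ||e_m||; taking m in the open disc arbitrarily
   close to lambda shows that D - lambda is not bounded below, so it has no bounded
   inverse. *)

Set Implicit Arguments. Unset Strict Implicit. Unset Printing Implicit Defensive.

Section ComplexModulus.
Variable R : realType.
Implicit Types a b z : R[i].

Lemma cmod_normc z : cmod z = ComplexField.Normc.normc z.
Proof. by case: z. Qed.

Lemma normr_cmod z : `|z| = (cmod z)%:C.
Proof. by rewrite normc_def. Qed.

Lemma cmod_ge0 z : 0 <= cmod z.
Proof. exact: sqrtr_ge0. Qed.

Lemma cmodM a b : cmod (a * b) = cmod a * cmod b.
Proof. by rewrite !cmod_normc ComplexField.Normc.normcM. Qed.

Lemma cmod1 : cmod (1 : R[i]) = 1.
Proof. by rewrite cmod_normc ComplexField.Normc.normc1. Qed.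

Lemma cmodR (x : R) : cmod x%:C = `|x|.
Proof. by rewrite /cmod /= expr0n /= addr0 sqrtr_sqr. Qed.

Lemma normr_Re_le_cmod z : `|complex.Re z| <= cmod z.
Proof.
by rewrite /cmod -sqrtr_sqr ler_sqrt ?lerDl ?sqr_ge0 // addr_ge0 ?sqr_ge0.
Qed.

Lemma normr_Im_le_cmod z : `|complex.Im z| <= cmod z.
Proof.
by rewrite /cmod -sqrtr_sqr ler_sqrt ?lerDr ?sqr_ge0 // addr_ge0 ?sqr_ge0.
Qed.

Lemma cmod_le_normr_ReIm z : cmod z <= `|complex.Re z| + `|complex.Im z|.
Proof.
have nn : 0 <= `|complex.Re z| + `|complex.Im z| by rewrite addr_ge0.
rewrite /cmod -(ger0_norm nn) -sqrtr_sqr ler_sqrt ?sqr_ge0 //.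
rewrite -(real_normK (num_real (complex.Re z))) -(real_normK (num_real (complex.Im z))).
by rewrite sqrrD -addrA lerD2l lerDr mulrn_wge0 ?mulr_ge0.
Qed.

Lemma Re_mul_complex z (x y : R) :
  complex.Re (z * (x +i* y)%C) = complex.Re z * x - complex.Im z * y.
Proof. by case: z. Qed.

End ComplexModulus.

Section ComplexExponential.
Variable R : realType.
Implicit Types a b w : R[i].

Definition cexp w : R[i] :=
  (expR (complex.Re w) * cos (complex.Im w)) +i* (expR (complex.Re w) * sin (complex.Im w)).

Lemma cexpD a b : cexp (a + b) = cexp a * cexp b.
Proof.
case: a b => a1 a2 [b1 b2]; rewrite /cexp /= expRD cosD sinD.
by apply/eqP; rewrite eq_complex /=; apply/andP; split; apply/eqP; ring.
Qed.

Lemma cmod_cexp w : cmod (cexp w) = expR (complex.Re w).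
Proof.
rewrite /cmod /cexp /= !exprMn -mulrDr addrC sin2cos2 subrK mulr1.
by rewrite sqrtr_sqr ger0_norm ?expR_ge0.
Qed.

End ComplexExponential.

Section RealTaylorBounds.
Variable R : realType.
Implicit Types x y : R.

Lemma MVT_from0 (f df : R -> R) x : (forall t : R, is_derive t (1 : R) f (df t)) ->
  exists2 c, `|c| <= `|x| & f x - f 0 = df c * x.
Proof.
move=> fdf.
have fcont a b : {within `[a, b], continuous f}.
  by apply: derivable_within_continuous => t _; exact: ex_derive.
have [x0|x0] := leP 0 x.
  have [c] := MVT_segment x0 (fun t _ => fdf t) (fcont _ _).
  rewrite in_itv /= => /andP[c0 cx] fxc; exists c; last by rewrite fxc subr0.
  by rewrite !ger0_norm.
have [c] := MVT_segment (ltW x0) (fun t _ => fdf t) (fcont _ _).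
rewrite in_itv /= => /andP[xc c0] fxc; exists c.
  by rewrite !ler0_norm ?(ltW x0) // lerN2.
by rewrite -opprB fxc sub0r mulrN opprK.
Qed.

Lemma sqr_normr x : x ^+ 2 = `|x| * `|x|.
Proof. by rewrite -normrM -expr2 ger0_norm ?sqr_ge0. Qed.

Lemma normr_expR_sub1 x : `|x| <= 1 -> `|expR x - 1| <= expR 1 * `|x|.
Proof.
move=> x1; have [c cx] := @MVT_from0 expR expR x (@is_derive_expR R).
rewrite expR0 => ->; rewrite normrM ger0_norm ?expR_ge0 // ler_wpM2r // ler_expR.
exact: le_trans (ler_norm c) (le_trans cx x1).
Qed.

Lemma normr_expR_sub1_sub x : `|x| <= 1 -> `|expR x - 1 - x| <= expR 1 * x ^+ 2.
Proof.
move=> x1.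
have fdf t : is_derive t (1 : R) (fun t => expR t - t) (expR t - 1).
  exact: is_deriveB.
have [c cx fx] := MVT_from0 x fdf.
have -> : expR x - 1 - x = (expR c - 1) * x by rewrite -fx /= expR0 subr0; ring.
rewrite normrM sqr_normr mulrA ler_wpM2r //.
by rewrite (le_trans (normr_expR_sub1 (le_trans cx x1))) // ler_wpM2l ?expR_ge0.
Qed.

Lemma normr_sin_le y : `|sin y| <= `|y|.
Proof.
have [c _] := @MVT_from0 sin cos y (@is_derive_sin R).
rewrite sin0 subr0 => ->; rewrite normrM ler_piMl //; exact: cos_max.
Qed.

Lemma normr_cos_sub1 y : `|cos y - 1| <= y ^+ 2.
Proof.
have [c cy] := @MVT_from0 cos (fun t => - sin t) y (@is_derive_cos R).
rewrite cos0 => ->; rewrite normrM normrN sqr_normr ler_wpM2r //.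
exact: le_trans (normr_sin_le c) cy.
Qed.

Lemma normr_sin_sub y : `|y| <= 1 -> `|sin y - y| <= y ^+ 2.
Proof.
move=> y1.
have fdf t : is_derive t (1 : R) (fun t => sin t - t) (cos t - 1).
  exact: is_deriveB.
have [c cy fy] := MVT_from0 y fdf.
have -> : sin y - y = (cos c - 1) * y by rewrite -fy /= sin0 !subr0.
rewrite normrM sqr_normr ler_wpM2r // (le_trans (normr_cos_sub1 c)) //.
by rewrite sqr_normr (le_trans _ cy) // ler_piMl // (le_trans cy).
Qed.

End RealTaylorBounds.

Lemma cmod_cexp_sub1_sub (R : realType) (w : R[i]) : cmod w <= 1 ->
  cmod (cexp w - 1 - w) <= (3 * expR 1 + 1) * cmod w ^+ 2.
Proof.
case: w => x y; set r := cmod _ => r1.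
have xr : `|x| <= r := normr_Re_le_cmod (x +i* y).
have yr : `|y| <= r := normr_Im_le_cmod (x +i* y).
have x1 : `|x| <= 1 := le_trans xr r1.
have r0 : 0 <= r := cmod_ge0 _.
have x2 : x ^+ 2 <= r ^+ 2 by rewrite sqr_normr -expr2 lerXn2r ?nnegrE.
have y2 : y ^+ 2 <= r ^+ 2 by rewrite sqr_normr -expr2 lerXn2r ?nnegrE.
have e0 : 0 <= expR 1 :> R := expR_ge0 1.
have ex : expR x <= expR 1 by rewrite ler_expR (le_trans (ler_norm x)).
have reA : `|expR x * cos y - 1 - x| <= 2 * expR 1 * r ^+ 2.
  have -> : expR x * cos y - 1 - x = (expR x - 1 - x) + expR x * (cos y - 1) by ring.
  rewrite (le_trans (ler_normD _ _)) // normrM ger0_norm ?expR_ge0 //.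
  have := normr_expR_sub1_sub x1.
  have : expR x * `|cos y - 1| <= expR 1 * y ^+ 2.
    by apply: ler_pM => //; exact: normr_cos_sub1.
  have : expR 1 * x ^+ 2 <= expR 1 * r ^+ 2 by rewrite ler_wpM2l.
  have : expR 1 * y ^+ 2 <= expR 1 * r ^+ 2 by rewrite ler_wpM2l.
  lra.
have imA : `|expR x * sin y - y| <= (expR 1 + 1) * r ^+ 2.
  have -> : expR x * sin y - y = (expR x - 1) * sin y + (sin y - y) by ring.
  rewrite (le_trans (ler_normD _ _)) // normrM.
  have := normr_sin_sub (le_trans yr r1).
  have : `|expR x - 1| * `|sin y| <= expR 1 * (`|x| * `|y|).
    by rewrite mulrA; apply: ler_pM => //; [exact: normr_expR_sub1 | exact: normr_sin_le].
  have : `|x| * `|y| <= r ^+ 2 by rewrite expr2; exact: ler_pM.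
  nra.
apply: le_trans (cmod_le_normr_ReIm _) _; rewrite /= subr0; lra.
Qed.

Lemma is_derive_quadratic_remainder (K : numFieldType) (f : K^o -> K^o) (z a C r : K) :
  0 <= C -> 0 < r ->
  (forall h : K, `|h| < r -> `|f (h + z) - f z - a * h| <= C * `|h| ^+ 2) ->
  is_derive z 1 f a.
Proof.
move=> C0 r0 fz.
suff quot : (fun h : K^o => h^-1 *: ((f \o shift z) (h *: 1) - f z)) @ 0^' --> a.
  by split; [exact: cvgP quot | exact: cvg_lim quot].
apply/cvgrPdist_le => e e0; near=> h.
have h0 : h != 0 by near: h; exact: nbhs_dnbhs_neq.
have hr : `|h| < r by near: h; exact: dnbhs0_lt.
have he : `|h| < e / (C + 1) by near: h; apply: dnbhs0_lt; rewrite divr_gt0 ?ltr_wpDl.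
rewrite /= [_ *: 1]mulr1 -[h^-1 *: _]/(h^-1 * _).
have -> : a - h^-1 * (f (h + z) - f z) = - h^-1 * (f (h + z) - f z - a * h) by field.
rewrite normrM normrN normfV.
apply: le_trans (ler_wpM2l _ (fz h hr)) _; first by rewrite invr_ge0.
have -> : `|h|^-1 * (C * `|h| ^+ 2) = C * `|h| by field; rewrite normr_eq0.
have hCe : (C + 1) * `|h| <= e by rewrite mulrC -ler_pdivlMr ?ltr_wpDl // ltW.
by apply: le_trans hCe; rewrite ler_wpM2r ?lerDl.
Unshelve. all: by end_near.
Qed.

Section CexpDerivative.
Variable R : realType.
Implicit Types c m z : R[i].

Lemma is_derive_cexpM c m z :
  is_derive (z : R[i]^o) 1 (fun w : R[i]^o => c * cexp (m * w) : R[i]^o)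
    (c * m * cexp (m * z)).
Proof.
set K := 3 * expR 1 + 1 : R.
have K0 : 0 <= K by rewrite addr_ge0 ?mulr_ge0 ?expR_ge0.
have m0 := cmod_ge0 m; have mz0 := cmod_ge0 (c * cexp (m * z)).
apply: (@is_derive_quadratic_remainder _ _ _ _
  (cmod (c * cexp (m * z)) * K * cmod m ^+ 2)%:C (cmod m + 1)^-1%:C).
- by rewrite lecR !mulr_ge0 ?sqr_ge0.
- by rewrite ltcR invr_gt0 ltr_wpDl.
move=> h; rewrite !normr_cmod ltcR -rmorphXn -rmorphM lecR => hm.
have -> : c * cexp (m * (h + z)) - c * cexp (m * z) - c * m * cexp (m * z) * h =
    c * cexp (m * z) * (cexp (m * h) - 1 - m * h).
  by rewrite mulrDr cexpD; ring.
have mh1 : cmod (m * h) <= 1.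
  rewrite cmodM -(mulfV (lt0r_neq0 (ltr_wpDl m0 ltr01))) ler_pM ?cmod_ge0 ?lerDl //.
  by rewrite ltW.
rewrite [cmod (_ * (_ - _))]cmodM -!mulrA ler_wpM2l //.
by apply: le_trans (cmod_cexp_sub1_sub mh1) _; rewrite cmodM exprMn expr2 !mulrA.
Qed.

Lemma entire_cexpM c m : entire (fun z => c * cexp (m * z)).
Proof. by move=> z; case: (is_derive_cexpM c m z). Qed.

Lemma Dop_cexpM c m z : Dop (fun z => c * cexp (m * z)) z = c * m * cexp (m * z).
Proof. exact: (@derive_val _ _ _ _ _ _ _ (is_derive_cexpM c m z)). Qed.

End CexpDerivative.

Section LaplaceKernel.
Variable R : realType.
Local Notation mu := (@lebesgue_measure R).

Definition exp_neg_abs (k x : R) : R := expR (- (k * `|x|)).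

Lemma exp_neg_abs_ge0 k x : 0 <= exp_neg_abs k x.
Proof. exact: expR_ge0. Qed.

Lemma continuous_exp_neg_abs k : continuous (exp_neg_abs k).
Proof.
move=> x; apply: continuous_comp; last exact: continuous_expR.
apply: (@continuousN _ R^o); apply: continuousM; first exact: cst_continuous.
exact: norm_continuous.
Qed.

Lemma measurable_exp_neg_abs k : measurable_fun setT (exp_neg_abs k).
Proof. exact: continuous_measurable_fun (@continuous_exp_neg_abs k). Qed.

Lemma integral_exp_neg_abs_itv0y k : 0 < k ->
  (\int[mu]_(x in `[0%R, +oo[%classic) (exp_neg_abs k x)%:E <= (k^-1)%:E)%E.
Proof.
move=> k0.
have mpdf : measurable_fun setT (fun x : R => (exponential_pdf k x)%:E).
  by apply/measurable_EFinP; exact: measurable_exponential_pdf.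
have pdf0 x : (0 <= (exponential_pdf k x)%:E)%E by rewrite lee_fin exponential_pdf_ge0 ?ltW.
have -> : (\int[mu]_(x in `[0%R, +oo[%classic) (exp_neg_abs k x)%:E =
    \int[mu]_(x in `[0%R, +oo[%classic) ((k^-1)%:E * (exponential_pdf k x)%:E))%E.
  apply: eq_integral => x; rewrite inE /= in_itv /= andbT => x0.
  rewrite exponential_pdfE // -EFinM mulrA mulVf ?gt_eqF // mul1r.
  by rewrite /exp_neg_abs ger0_norm // mulNr.
rewrite ge0_integralZl_EFin ?invr_ge0 ?(ltW k0) //; last exact: measurable_funS mpdf.
rewrite -[X in (_ <= X)%E]mule1 lee_wpmul2l ?lee_fin ?invr_ge0 ?(ltW k0) //.
rewrite -(integral_exponential_pdf k0); exact: ge0_subset_integral.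
Qed.

Lemma integral_exp_neg_abs_le k : 0 < k ->
  (\int[mu]_x (exp_neg_abs k x)%:E <= (k^-1 + k^-1)%:E)%E.
Proof.
move=> k0.
have mk : measurable_fun setT (fun x => (exp_neg_abs k x)%:E).
  by apply/measurable_EFinP; exact: measurable_exp_neg_abs.
have k_ge0 x : (0 <= (exp_neg_abs k x)%:E)%E by rewrite lee_fin exp_neg_abs_ge0.
rewrite -(setUv `[0%R, +oo[%classic) ge0_integral_setU //; first last.
- exact/disj_setPCl.
- by rewrite setUv.
- exact: measurableC.
rewrite EFinD leeD ?integral_exp_neg_abs_itv0y //.
have reflect0 : (\int[mu]_(x in `]-oo, (- 0)%R]%classic) (exp_neg_abs k x)%:E =
    \int[mu]_(x in `[0%R, +oo[%classic) ((exp_neg_abs k \o -%R) x)%:E)%E.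
  apply: ge0_integration_by_substitutionNy => [|x _]; last exact: exp_neg_abs_ge0.
  exact: continuous_subspaceT (@continuous_exp_neg_abs k).
rewrite oppr0 in reflect0.
apply: le_trans (integral_exp_neg_abs_itv0y k0).
apply: le_trans (_ : (_ <= \int[mu]_(x in `]-oo, 0%R]%classic) (exp_neg_abs k x)%:E)%E) _.
  apply: ge0_subset_integral => //; first exact: measurableC.
    exact: measurable_funS mk.
  move=> x /=; rewrite in_itv /= andbT => /negP; rewrite -ltNge => x0.
  by rewrite in_itv /= ltW.
rewrite reflect0 le_eqVlt; apply/orP; left; apply/eqP/eq_integral => x _.
by rewrite /exp_neg_abs /= normrN.
Qed.

Lemma integral_exp_neg_abs_prod_lt_pinfty k : 0 < k ->
  (\int[(mu \x mu)%E]_(xy in setT)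
     (exp_neg_abs k xy.1 * exp_neg_abs k xy.2)%:E < +oo)%E.
Proof.
move=> k0.
have mprod : measurable_fun setT (fun xy : R * R => (exp_neg_abs k xy.1 * exp_neg_abs k xy.2)%:E).
  apply/measurable_EFinP; apply: measurable_funM.
    exact: measurableT_comp (measurable_exp_neg_abs k) measurable_fst.
  exact: measurableT_comp (measurable_exp_neg_abs k) measurable_snd.
have prod0 xy : (0 <= (exp_neg_abs k xy.1 * exp_neg_abs k xy.2)%:E)%E.
  by rewrite lee_fin mulr_ge0 ?exp_neg_abs_ge0.
rewrite (@fubini_tonelli1 _ _ _ _ _ mu mu _ mprod prod0) /fubini_F /=.
set J := (\int[mu]_y (exp_neg_abs k y)%:E)%E.
have J0 : (0 <= J)%E by apply: integral_ge0 => y _; rewrite lee_fin exp_neg_abs_ge0.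
have Jfin : J \is a fin_num.
  by rewrite ge0_fin_numE // (le_lt_trans (integral_exp_neg_abs_le k0)) ?ltry.
have ek0 y : (0 <= (exp_neg_abs k y)%:E)%E by rewrite lee_fin exp_neg_abs_ge0.
under eq_integral => x _.
  under eq_integral do rewrite EFinM.
  rewrite ge0_integralZl_EFin ?exp_neg_abs_ge0 //; last first.
    by apply/measurable_EFinP; exact: measurable_exp_neg_abs.
  rewrite -/J -(fineK Jfin) -EFinM mulrC.
  over.
under eq_integral do rewrite EFinM.
rewrite ge0_integralZl_EFin ?fine_ge0 //; last first.
  by apply/measurable_EFinP; exact: measurable_exp_neg_abs.
by rewrite -/J -(fineK Jfin) -EFinM ltry.
Qed.

End LaplaceKernel.

Section CexpFockWeight.
Variable R : realType.
Variables (p alpha : R) (m : R[i]).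
Hypothesis p0 : 0 < p.

Definition cexp_weight (xy : R * R) : R :=
  expR (p * (complex.Re m * xy.1 - complex.Im m * xy.2)
        - p * alpha * Num.sqrt (xy.1 ^+ 2 + xy.2 ^+ 2)).

Lemma fock_integrand_cexpM (c : R[i]) xy :
  fock_integrand p alpha 1 (fun z => c * cexp (m * z)) xy = (cmod c `^ p * cexp_weight xy)%:E.
Proof.
rewrite /fock_integrand /cexp_weight cmodM cmod_cexp powRM ?cmod_ge0 ?expR_ge0 //.
rewrite powRr1 ?cmod_ge0 // -expRM -mulrA -expRD Re_mul_complex.
by rewrite [_ * p]mulrC.
Qed.

Lemma measurable_cexp_weight : measurable_fun setT cexp_weight.
Proof.
apply: measurableT_comp; first exact: measurable_expR.
apply: measurable_funB; apply: measurable_funM => //.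
  apply: measurable_funB.
    by apply: measurable_funM => //; exact: measurable_fst.
  by apply: measurable_funM => //; exact: measurable_snd.
rewrite -/((Num.sqrt \o (fun xy : R * R => xy.1 ^+ 2 + xy.2 ^+ 2))).
apply: measurableT_comp; first exact: continuous_measurable_fun (@sqrt_continuous R).
by apply: measurable_funD; apply: measurable_funX; [exact: measurable_fst | exact: measurable_snd].
Qed.

Lemma cexp_weight_le_exp_neg_abs xy : cmod m < alpha ->
  cexp_weight xy <=
  exp_neg_abs (p * (alpha - cmod m) / 2) xy.1 * exp_neg_abs (p * (alpha - cmod m) / 2) xy.2.
Proof.
case: xy => x y ma; rewrite /cexp_weight /exp_neg_abs -expRD ler_expR /=.
have r_cmod : Num.sqrt (x ^+ 2 + y ^+ 2) = cmod (x +i* y) by [].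
rewrite r_cmod; set r := cmod (x +i* y).
have xr : `|x| <= r := normr_Re_le_cmod (x +i* y).
have yr : `|y| <= r := normr_Im_le_cmod (x +i* y).
have Rer : complex.Re m * x - complex.Im m * y <= cmod m * r.
  rewrite -Re_mul_complex /r -cmodM; apply: le_trans (ler_norm _) _.
  exact: normr_Re_le_cmod.
have := ler_wpM2l (ltW p0) Rer.
have k0 : 0 <= p * (alpha - cmod m) by rewrite mulr_ge0 ?subr_ge0 ?ltW.
have : p * (alpha - cmod m) * (`|x| + `|y|) <= p * (alpha - cmod m) * (2 * r).
  apply: ler_wpM2l => //; lra.
nra.
Qed.

Lemma cexp_weight_ge_on_unit_square (x y : R) : 0 <= alpha ->
  0 <= x <= 1 -> 0 <= y <= 1 ->
  expR (- (2 * p * (cmod m + alpha))) <= cexp_weight (x, y).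
Proof.
move=> a0 /andP[x0 x1] /andP[y0 y1]; rewrite /cexp_weight ler_expR /=.
have r_cmod : Num.sqrt (x ^+ 2 + y ^+ 2) = cmod (x +i* y) by [].
rewrite r_cmod; set r := cmod (x +i* y).
have r2 : r <= 2.
  apply: le_trans (cmod_le_normr_ReIm _) _; rewrite /= !ger0_norm //; lra.
have Rer : - (cmod m * r) <= complex.Re m * x - complex.Im m * y.
  rewrite -Re_mul_complex /r -cmodM lerNl; apply: le_trans (normr_Re_le_cmod _).
  by rewrite -normrN ler_norm.
have := cmod_ge0 m; have := cmod_ge0 (x +i* y); rewrite -/r => r0 m0.
have := ler_wpM2l (ltW p0) Rer.
have pm0 : 0 <= p * (cmod m + alpha) by rewrite mulr_ge0 ?addr_ge0 // ltW.
have := ler_wpM2l pm0 r2.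
nra.
Qed.

End CexpFockWeight.

Section CexpFockNorm.
Variable R : realType.
Local Notation mu := (@lebesgue_measure R).
Local Notation mu2 := (mu \x mu)%E.
Variables (p alpha : R) (m : R[i]).
Hypothesis p0 : 0 < p.

Definition cexp_mass : \bar R := (\int[mu2]_(xy in setT) (cexp_weight p alpha m xy)%:E)%E.

Let weight_ge0 xy : (0 <= (cexp_weight p alpha m xy)%:E)%E.
Proof. by rewrite lee_fin expR_ge0. Qed.

Let measurable_weight : measurable_fun setT (fun xy => (cexp_weight p alpha m xy)%:E).
Proof. by apply/measurable_EFinP; exact: measurable_cexp_weight. Qed.

Lemma cexp_mass_ge0 : (0 <= cexp_mass)%E.
Proof. exact: integral_ge0. Qed.

Lemma cexp_mass_fin_num : cmod m < alpha -> cexp_mass \is a fin_num.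
Proof.
move=> ma; set k := p * (alpha - cmod m) / 2.
rewrite ge0_fin_numE ?cexp_mass_ge0 //.
apply: le_lt_trans (integral_exp_neg_abs_prod_lt_pinfty (_ : 0 < k)); last first.
  by rewrite divr_gt0 // mulr_gt0 // subr_gt0.
apply: ge0_le_integral => //.
- apply/measurable_EFinP; apply: measurable_funM.
    exact: measurableT_comp (measurable_exp_neg_abs k) measurable_fst.
  exact: measurableT_comp (measurable_exp_neg_abs k) measurable_snd.
by move=> xy _; rewrite lee_fin cexp_weight_le_exp_neg_abs.
Qed.

Lemma cexp_mass_gt0 : 0 <= alpha -> (0 < cexp_mass)%E.
Proof.
move=> a0; set c := expR (- (2 * p * (cmod m + alpha))).
set I01 := `[0%R, 1%R]%classic : set R.
have mI : measurable I01 by exact: measurable_itv.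
have muI : mu I01 = 1%E by rewrite lebesgue_measure_itv /= ifT ?lte_fin ?ltr01 // oppr0 adde0.
apply: (@lt_le_trans _ _ (c%:E * mu2 (I01 `*` I01))%E).
  rewrite product_measure1E //; change (0%R < c%:E * (mu I01 * mu I01))%E.
  by rewrite muI !mule1 lte_fin expR_gt0.
rewrite -integral_cst; last exact: measurableX.
have mII : measurable (I01 `*` I01) by exact: measurableX.
apply: (@le_trans _ _ (\int[mu2]_(xy in I01 `*` I01) (cexp_weight p alpha m xy)%:E)%E).
  apply: ge0_le_integral => //.
  - by move=> xy _; rewrite lee_fin expR_ge0.
  - exact: measurable_funS measurableT (@subsetT _ _) measurable_weight.
  move=> [x y] [/=]; rewrite /I01 /= !in_itv /= => xI yI.
  by rewrite lee_fin cexp_weight_ge_on_unit_square.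
exact: ge0_subset_integral.
Qed.

Lemma fock_pnorm_cexpM (c : R[i]) :
  fock_pnorm p alpha 1 (fun z => c * cexp (m * z)) = ((cmod c `^ p)%:E * cexp_mass)%E.
Proof.
rewrite /fock_pnorm /cexp_mass.
under eq_integral do rewrite fock_integrand_cexpM EFinM.
by rewrite ge0_integralZl_EFin ?powR_ge0.
Qed.

Lemma in_Fock_cexpM (c : R[i]) : cmod m < alpha -> in_Fock p alpha 1 (fun z => c * cexp (m * z)).
Proof.
move=> ma; split; first exact: entire_cexpM.
by rewrite fock_pnorm_cexpM -(fineK (cexp_mass_fin_num ma)) -EFinM ltry.
Qed.

Lemma fock_norm_cexpM (c : R[i]) : cmod m < alpha ->
  fock_norm p alpha 1 (fun z => c * cexp (m * z)) = cmod c * fine cexp_mass `^ p^-1.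
Proof.
move=> ma; rewrite /fock_norm fock_pnorm_cexpM -(fineK (cexp_mass_fin_num ma)) -EFinM /=.
rewrite powRM ?powR_ge0 ?fine_ge0 ?cexp_mass_ge0 //.
by rewrite -powRrM mulfV ?gt_eqF // powRr1 ?cmod_ge0.
Qed.

Lemma fine_cexp_mass_gt0 : cmod m < alpha -> 0 < fine cexp_mass.
Proof.
move=> ma; have a0 : 0 <= alpha := le_trans (cmod_ge0 m) (ltW ma).
by rewrite -lte_fin fineK ?cexp_mass_fin_num ?cexp_mass_gt0.
Qed.

End CexpFockNorm.

Lemma approximate_eigenvalue_in_spectrum_Fock (R : realType) (p alpha m : R)
    (T : (R[i] -> R[i]) -> R[i] -> R[i]) (lambda : R[i]) :
  (forall eps : R, 0 < eps -> exists f, [/\ in_Fock p alpha m f,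
      in_Fock p alpha m (fun z => T f z - lambda * f z),
      0 < fock_norm p alpha m f &
      fock_norm p alpha m (fun z => T f z - lambda * f z) <= eps * fock_norm p alpha m f]) ->
  in_spectrum_Fock p alpha m T lambda.
Proof.
move=> approx [S [[_ _ [M SM]] SK _]].
have M1 : 0 < `|M| + 1 by rewrite ltr_wpDl.
have [f [fF gF f0 gf]] := approx (`|M| + 1)^-1 ltac:(by rewrite invr_gt0).
have g0 : 0 <= fock_norm p alpha m (fun z => T f z - lambda * f z) by exact: powR_ge0.
have fg := SM _ gF; rewrite SK // in fg.
set Nf := fock_norm p alpha m f in f0 fg gf *.
set Ng := fock_norm p alpha m _ in g0 fg gf.
(* Opaque, so that [//] below does not try to evaluate the norms by conversion. *)
clearbody Nf Ng.
have le_f : Nf <= `|M| / (`|M| + 1) * Nf.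
  apply: le_trans fg _; apply: le_trans (ler_wpM2r g0 (ler_norm M)) _.
  by rewrite -mulrA ler_wpM2l.
have lt_f : `|M| / (`|M| + 1) * Nf < Nf.
  by rewrite gtr_pMl // ltr_pdivrMr // mul1r ltrDl.
by have := le_lt_trans le_f lt_f; rewrite ltxx.
Qed.

Lemma cmod_sub_le_within_disc (R : realType) (alpha eps : R) (lambda : R[i]) :
  0 < alpha -> 0 < eps -> cmod lambda <= alpha ->
  exists m : R[i], cmod m < alpha /\ cmod (m - lambda) <= eps.
Proof.
move=> alpha0 eps0 la; set d := eps / (eps + alpha).
have d0 : 0 < d by rewrite divr_gt0 ?addr_gt0.
have d1 : d < 1 by rewrite ltr_pdivrMr ?addr_gt0 // mul1r ltrDl.
have dalpha : d * alpha <= eps.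
  by rewrite mulrAC ler_pdivrMr ?addr_gt0 // ler_pM2l // lerDr ltW.
exists ((1 - d)%:C * lambda); split.
- have d_le1 : 0 <= 1 - d by rewrite subr_ge0 ltW.
  rewrite cmodM cmodR ger0_norm //; apply: le_lt_trans (ler_wpM2l d_le1 la) _.
  by rewrite gtr_pMl // ltrBlDr ltrDl.
- have -> : (1 - d)%:C * lambda - lambda = (- d)%:C * lambda.
    by rewrite rmorphN rmorphB /= rmorph1; ring.
  rewrite cmodM cmodR normrN ger0_norm ?(ltW d0) //.
  exact: le_trans (ler_wpM2l (ltW d0) la) dalpha.
Qed.

Theorem mainTheorem3 (R : realType) (p alpha : R) (hp : 1 <= p) (halpha : 0 < alpha)
  (lambda : R[i]) (hlambda : cmod lambda <= alpha) :
  in_spectrum_Fock p alpha 1 (@Dop R) lambda.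
Proof.
have p0 : 0 < p by apply: lt_le_trans hp.
apply: approximate_eigenvalue_in_spectrum_Fock => eps eps0.
have [m [ma m_lambda]] := cmod_sub_le_within_disc halpha eps0 hlambda.
have eigen : (fun z => Dop (fun w => 1 * cexp (m * w)) z - lambda * (1 * cexp (m * z))) =
    (fun z => (m - lambda) * cexp (m * z)).
  by apply/funext => z; rewrite Dop_cexpM; ring.
exists (fun z => 1 * cexp (m * z)); rewrite eigen !fock_norm_cexpM // cmod1 mul1r.
have N0 := powR_gt0 p^-1 (fine_cexp_mass_gt0 p0 ma).
set N := fine _ `^ _ in N0 *; clearbody N.
split; [exact: in_Fock_cexpM | exact: in_Fock_cexpM | exact: N0 |].
by rewrite ler_pM2r.
Qed.
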